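(* Let $(W,S)$ be a Coxeter system whose Davis complex $\Sigma(W,S)$ is two-dimensional, and suppose that for every $t\in S$ the (unweighted, $\mathbf{q}=\mathbf{1}$) reduced $L^2$-homology $L^2_\mathbf{1}H_i(\Omega(S,\{t\}),\partial\Omega(S,\{t\}))$ vanishes for all $i\neq 1$. Then $L^2_\mathbf{q}H_2(\Sigma(W,S))=0$ for every multiparameter $\mathbf{q}\le\mathbf{1}$ (i.e. $q_s\le 1$ for all $s\in S$).
   Context: A Coxeter system $(W,S)$; $U\subseteq S$ is spherical if $\langle U\rangle$ is finite. A multiparameter is $\mathbf{q}=(q_s)_{s\in S}$, $q_s>0$, constant on conjugacy classes; $\mathbf{1}$ is the all-ones multiparameter. The Coxeter cellulation of the Davis complex has cells $wc_U$ ($w\in W$, $U$ spherical) of dimension $|U|$. The $(S,T)$-ruin for spherical $T$: $\Omega(S,T)$ is the union of closed Coxeter cells of type $T'\supseteq T$ ($T'$ spherical), and $\partial\Omega(S,T)$ consists of the cells of $\Omega(S,T)$ whose type does not contain $T$. Weighted $L^2$-homology: cell $w\sigma$ gets measure $q_u$, $u$ the shortest element of $wW_{S(\sigma)}$; chains are square-summable for $\sum f(\sigma)g(\sigma)\mu_\mathbf{q}(\sigma)$; $\partial^\mathbf{q}$ is the adjoint of the coboundary; reduced homology $\ker\partial^\mathbf{q}/\overline{\operatorname{im}\partial^\mathbf{q}}$ (relative version for pairs). *)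

From Stdlib Require Import Reals List ClassicalEpsilon ClassicalDescription.
From mathcomp Require Import all_boot.
Set Implicit Arguments. Unset Strict Implicit. Unset Printing Implicit Defensive.

Record grp := Grp {
  gcar :> Type;
  gmul : gcar -> gcar -> gcar;
  gone : gcar;
  ginv : gcar -> gcar;
  gmulA : forall x y z, gmul x (gmul y z) = gmul (gmul x y) z;
  gmul1l : forall x, gmul gone x = x;
  gmulVl : forall x, gmul (ginv x) x = gone }.
Arguments gmul {g}. Arguments gone {g}. Arguments ginv {g}.

Fixpoint gpow (G : grp) (x : G) (n : nat) : G :=
  match n with O => gone | S k => gmul x (gpow x k) end.

Definition geval (G : grp) (S : finType) (gen : S -> G) (w : seq S) : G :=
  foldr (fun s acc => gmul (gen s) acc) gone w.

(* (W,S) is a Coxeter system (Bourbaki): S is a set of involutions generating W,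
   and W has the presentation < S | (st)^{m(s,t)} = 1 >, m(s,t) = order of st,
   expressed by the universal property of the presentation. *)
Definition coxeter_system (G : grp) (S : finType) (gen : S -> G) : Prop :=
  injective gen /\
  (forall s, gen s <> gone) /\
  (forall s, gmul (gen s) (gen s) = gone) /\
  (forall x : G, exists w : seq S, geval gen w = x) /\
  (forall (H : grp) (phi : S -> H),
     (forall s t n, gpow (gmul (gen s) (gen t)) n = gone ->
                    gpow (gmul (phi s) (phi t)) n = gone) ->
     exists psi : G -> H,
       (forall x y, psi (gmul x y) = gmul (psi x) (psi y)) /\
       (forall s, psi (gen s) = phi s)).

Section Davis.
Variables (G : grp) (S : finType) (gen : S -> G).
Local Open Scope R_scope.

Definition len (x : G) : nat :=
  epsilon (inhabits 0%nat) (fun n =>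
    (exists w, size w = n /\ geval gen w = x) /\
    (forall w, geval gen w = x -> (n <= size w)%N)).

Definition redword (x : G) : seq S :=
  epsilon (inhabits [::]) (fun w => geval gen w = x /\ size w = len x).
Definition qw (q : S -> R) (x : G) : R :=
  foldr (fun s acc => q s * acc) 1 (redword x).

Definition inWU (U : {set S}) (x : G) : Prop :=
  exists w : seq S, all (fun s => s \in U) w /\ geval gen w = x.
Definition spherical (U : {set S}) : Prop :=
  exists l : list G, forall x, inWU U x -> In x l.

(* dim Sigma(W,S) = max { |U| : U spherical } = 2 *)
Definition davis_dim2 : Prop :=
  (exists U, spherical U /\ #|U| = 2%nat) /\
  (forall U, spherical U -> (#|U| <= 2)%N).

Definition multiparameter (q : S -> R) : Prop :=
  (forall s, 0 < q s) /\
  (forall s t (x : G), gen t = gmul (ginv x) (gmul (gen s) x) -> q s = q t).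

Definition min_in_coset (w : G) (U : {set S}) : Prop :=
  forall u, inWU U u -> (len w <= len (gmul w u))%N.
(* Coxeter cells w c_U are indexed by (w,U), U spherical, w shortest in wW_U;
   the dimension of w c_U is |U| and its type is U. *)
Definition is_cell (w : G) (U : {set S}) : Prop := spherical U /\ min_in_coset w U.
Definition minrep (v : G) (U : {set S}) : G :=
  epsilon (inhabits v) (fun w => inWU U (gmul (ginv v) w) /\ min_in_coset w U).

Definition ind (P : Prop) : R := if excluded_middle_informative P then 1 else 0.

(* incidence number [w c_U : v c_{U - r}] for v in wW_U, w shortest in wW_U:
   (-1)^{l(w^{-1} v)} * (-1)^{position of r in U}  (orientation via enum order of S) *)
Definition incid (U : {set S}) (r : S) (w v : G) : R :=
  pow (-1) (len (gmul (ginv w) v)) *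
  pow (-1) #|[set x in U | (enum_rank x < enum_rank r)%N]|.

(* Cells in play are those whose type satisfies P (P = True: the Davis complex;
   P U = (t \in U): cells of Omega(S,{t}) not in its boundary, i.e. the relative
   chain complex of the pair).  Measure of the cell w c_U (w shortest) is q_w. *)
(* weighted boundary d^q = adjoint of the coboundary w.r.t. the q-inner product:
   (d^q f)(tau) = (1/mu(tau)) * sum_{sigma > tau} [sigma:tau] mu(sigma) f(sigma) *)
Definition bdq (q : S -> R) (P : {set S} -> Prop) (f : G -> {set S} -> R)
    (v : G) (V : {set S}) : R :=
  ind (is_cell v V /\ P V) * / qw q v *
  \big[Rplus/0]_(r : S)
     (ind (r \notin V) *
      (ind (is_cell (minrep v (r |: V)) (r |: V) /\ P (r |: V)) *
       incid (r |: V) r (minrep v (r |: V)) v *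
       qw q (minrep v (r |: V)) * f (minrep v (r |: V)) (r |: V))).

Definition wsum (q : S -> R) (h : G -> {set S} -> R) (l : list (G * {set S})) : R :=
  fold_right (fun p acc => qw q p.1 * (h p.1 p.2) ^ 2 + acc) 0 l.

Definition l2chain (q : S -> R) (P : {set S} -> Prop) (i : nat)
    (f : G -> {set S} -> R) : Prop :=
  (forall w U, f w U <> 0 -> is_cell w U /\ P U /\ #|U| = i) /\
  (exists B, forall l, NoDup l -> wsum q f l <= B).

(* reduced L^2_q homology in degree i vanishes:
   ker d_i is contained in the closure of im d_{i+1}. *)
Definition L2H_vanishes (q : S -> R) (P : {set S} -> Prop) (i : nat) : Prop :=
  forall f, l2chain q P i f -> (forall v V, bdq q P f v V = 0) ->
  forall eps, 0 < eps -> exists g, l2chain q P i.+1 g /\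
    forall l, NoDup l -> wsum q (fun v V => bdq q P g v V - f v V) l <= eps.

End Davis.

(* A q-weighted 2-cycle f on the Davis complex has no 3-cells to be a boundary
   of, so vanishing of its L^2 homology means f = 0.  Fix a cell v c_V in the
   support of f and a generator t in V.  Rescaling by the cell measure and
   cutting off to the cells whose type contains t, f' w U := q_w f(w, U),
   turns f into an unweighted relative 2-cycle of (Omega(S,{t}), its boundary):
   the weighted boundary of f is, up to the factor q_v, the unweighted boundary
   of f', since the (S,{t})-ruin is closed under enlarging types.  It is square
   summable because q_w <= 1 makes q_w^2 <= q_w.  The ruin has no 3-cells
   either, so the vanishing of its second L^2 homology forces f' = 0, whence
   f(v, V) = 0. *)
From Pilot Require Import Defs.
From Stdlib Require Import Classical ClassicalDescription Reals Lra.
From mathcomp Require Import all_boot.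

Set Implicit Arguments.
Unset Strict Implicit.

Local Open Scope R_scope.

Lemma ind_T {P : Prop} : P -> Defs.ind P = 1.
Proof. by move=> HP; rewrite /Defs.ind; case: excluded_middle_informative. Qed.

Lemma ind_F {P : Prop} : ~ P -> Defs.ind P = 0.
Proof. by move=> HP; rewrite /Defs.ind; case: excluded_middle_informative. Qed.

Lemma ind_iff (P Q : Prop) : (P <-> Q) -> Defs.ind P = Defs.ind Q.
Proof.
move=> PQ; case: (classic P) => HP.
- by rewrite !ind_T //; apply/PQ.
- by rewrite !ind_F // => /PQ.
Qed.

Section Davis.
Variables (G : grp) (S : finType) (gen : S -> G).

Lemma qw_gt0 (q : S -> R) (w : G) : (forall s, 0 < q s) -> 0 < qw gen q w.
Proof.
move=> q_gt0; rewrite /qw; elim: (redword gen w) => [|s r IH] /=; first lra.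
exact: Rmult_lt_0_compat.
Qed.

Lemma qw_le1 (q : S -> R) (w : G) : (forall s, 0 <= q s <= 1) -> qw gen q w <= 1.
Proof.
move=> q01; rewrite /qw.
have : 0 <= foldr (fun s acc => q s * acc) 1 (redword gen w) <= 1.
  elim: (redword gen w) => [|s r IH] /=; first lra.
  by have := q01 s; split; nra.
by case.
Qed.

Lemma qw_one (w : G) : qw gen (fun _ => R1) w = 1.
Proof. by rewrite /qw; elim: (redword gen w) => [|s r /= ->] //=; lra. Qed.

Lemma wsum_zero (q : S -> R) (l : list (G * {set S})) :
  wsum gen q (fun _ _ => 0) l = 0.
Proof. by elim: l => [|c l /= ->] //=; lra. Qed.

Lemma wsum_eq (q : S -> R) (h h' : G -> {set S} -> R) l :
  (forall v V, h v V = h' v V) -> wsum gen q h l = wsum gen q h' l.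
Proof. by move=> hh'; elim: l => [|c l /= ->] //=; rewrite hh'. Qed.

Lemma bdq_eq0 (q : S -> R) (P : {set S} -> Prop) (f : G -> {set S} -> R) v V :
  (forall w U, f w U = 0) -> bdq gen q P f v V = 0.
Proof.
move=> f0; rewrite /bdq; set s := \big[Rplus/0]_r _.
have -> : s = 0.
  by apply: (big_ind (fun x => x = 0)) => [|x y -> ->|r _]; rewrite ?f0; lra.
lra.
Qed.

Lemma l2chain_zero (q : S -> R) (P : {set S} -> Prop) (i : nat) :
  l2chain gen q P i (fun _ _ => 0).
Proof.
split=> [w U []//|]; exists 0 => l _; rewrite wsum_zero; lra.
Qed.

Lemma l2chain_above_dim_eq0 (q : S -> R) (P : {set S} -> Prop) (n i : nat) f :
  (forall U, spherical gen U -> (#|U| <= n)%N) -> (n < i)%N ->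
  l2chain gen q P i f -> forall w U, f w U = 0.
Proof.
move=> dimS lt_ni [supp _] w U; apply: NNPP => fwU.
have [[sphU _] [_ cardU]] := supp w U fwU.
by have := dimS U sphU; rewrite cardU leqNgt lt_ni.
Qed.

Lemma L2H_vanishes_of_cycles_eq0 (q : S -> R) (P : {set S} -> Prop) (i : nat) :
  (forall f, l2chain gen q P i f -> (forall v V, bdq gen q P f v V = 0) ->
     forall v V, f v V = 0) ->
  L2H_vanishes gen q P i.
Proof.
move=> cyc0 f fl2 fcyc eps eps_gt0; exists (fun _ _ => 0).
split; first exact: l2chain_zero.
move=> l _; rewrite (@wsum_eq q _ (fun _ _ => 0)) ?wsum_zero; first lra.
by move=> v V; rewrite bdq_eq0 // cyc0 //; lra.
Qed.

Lemma cycles_eq0_of_L2H_vanishes (q : S -> R) (P : {set S} -> Prop) (i : nat) :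
  (forall w, 0 < qw gen q w) ->
  (forall g, l2chain gen q P i.+1 g -> forall w U, g w U = 0) ->
  L2H_vanishes gen q P i ->
  forall f, l2chain gen q P i f -> (forall v V, bdq gen q P f v V = 0) ->
  forall v V, f v V = 0.
Proof.
move=> qw_pos top0 van f fl2 fcyc v V; apply: NNPP => fvV.
have fvV2 : 0 < f v V ^ 2 by rewrite -Rsqr_pow2; exact: Rsqr_pos_lt.
have qv := qw_pos v.
have eps_gt0 : 0 < qw gen q v * f v V ^ 2 / 2 by apply: Rdiv_lt_0_compat; nra.
have [g [gl2 approx]] := van f fl2 fcyc _ eps_gt0.
have := approx [:: (v, V)] (List.NoDup_cons _ (@List.in_nil _ _) (List.NoDup_nil _)).
rewrite /= bdq_eq0; last exact: top0.
nra.
Qed.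

Definition unweighted_restriction (q : S -> R) (P : {set S} -> Prop)
    (f : G -> {set S} -> R) (w : G) (U : {set S}) : R :=
  Defs.ind (P U) * qw gen q w * f w U.

Lemma bdq_unweighted_restriction (q : S -> R) (P : {set S} -> Prop) f v V :
  (forall r U, P U -> P (r |: U)) -> qw gen q v <> 0 ->
  bdq gen (fun _ => R1) P (unweighted_restriction q P f) v V =
  Defs.ind (P V) * qw gen q v * bdq gen q (fun _ => True) f v V.
Proof.
move=> P_up qv0; case: (classic (P V)) => PV; last first.
  rewrite /bdq (ind_F PV) (@ind_F (is_cell gen v V /\ P V)); [lra | tauto].
rewrite /bdq (ind_T PV) qw_one.
rewrite (@ind_iff (is_cell gen v V /\ P V) (is_cell gen v V /\ True)); last tauto.
rewrite (eq_bigr (fun r => Defs.ind (r \notin V) *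
    (Defs.ind (is_cell gen (minrep gen v (r |: V)) (r |: V) /\ True) *
     incid gen (r |: V) r (minrep gen v (r |: V)) v *
     qw gen q (minrep gen v (r |: V)) * f (minrep gen v (r |: V)) (r |: V))));
  first by field.
move=> r _; have PrV := P_up r V PV.
rewrite /unweighted_restriction qw_one (ind_T PrV).
rewrite (@ind_iff (is_cell gen (minrep gen v (r |: V)) (r |: V) /\ P (r |: V))
                  (is_cell gen (minrep gen v (r |: V)) (r |: V) /\ True)); [lra | tauto].
Qed.

Lemma l2chain_unweighted_restriction (q : S -> R) (P : {set S} -> Prop) (i : nat) f :
  (forall w, 0 <= qw gen q w <= 1) ->
  l2chain gen q (fun _ => True) i f ->
  l2chain gen (fun _ => R1) P i (unweighted_restriction q P f).
Proof.
move=> qw01 [supp [B bound]]; split.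
- move=> w U; rewrite /unweighted_restriction.
  case: (classic (P U)) => PU; last first.
    by rewrite ind_F //; case; lra.
  move=> fwU; have f_ne0 : f w U <> 0 by move=> f0; apply: fwU; rewrite f0; lra.
  by have [cellU [_ cardU]] := supp w U f_ne0.
- exists B => l NDl; apply: Rle_trans (bound l NDl).
  elim: l {NDl} => [|[w U] l IH] /=; first lra.
  apply: Rplus_le_compat IH; rewrite qw_one /unweighted_restriction.
  have [qw_ge0 qw_le1] := qw01 w.
  have qw_f2 := Rmult_le_pos _ _ qw_ge0 (pow2_ge_0 (f w U)).
  by case: (classic (P U)) => PU; [rewrite (ind_T PU) | rewrite (ind_F PU)]; nra.
Qed.

End Davis.

Theorem corollary6p5 (G : grp) (S : finType) (gen : S -> G)
  (Hcox : coxeter_system gen)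
  (Hdim : davis_dim2 gen)
  (Hruin : forall (t : S) (i : nat), i <> 1%nat ->
     L2H_vanishes gen (fun _ => R1) (fun U => t \in U) i)
  (q : S -> R) (Hq : multiparameter gen q) (Hq1 : forall s, Rle (q s) R1) :
  L2H_vanishes gen q (fun _ => True) 2.
Proof.
have [_ dim2] := Hdim; have [q_gt0 _] := Hq.
have qv_gt0 w : 0 < qw gen q w by exact: qw_gt0.
have qw01 w : 0 <= qw gen q w <= 1.
  by split; [apply: Rlt_le | apply: qw_le1 => s; have := q_gt0 s; have := Hq1 s; lra].
apply: L2H_vanishes_of_cycles_eq0 => f fl2 fcyc v V; apply: NNPP => fvV.
have [_ [_ cardV]] := fl2.1 v V fvV.
have [t tV] : exists t, t \in V by apply/card_gt0P; rewrite cardV.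
have ruin_up (r : S) (U : {set S}) : t \in U -> t \in r |: U.
  by rewrite in_setU => ->; rewrite orbT.
have f'_cycle (v' : G) (V' : {set S}) : bdq gen (fun _ => R1) (fun U => t \in U)
    (unweighted_restriction gen q (fun U => t \in U) f) v' V' = 0.
  rewrite bdq_unweighted_restriction ?fcyc; first lra.
  - exact: ruin_up.
  - by have := qv_gt0 v'; lra.
have qw_one_gt0 w : 0 < qw gen (fun _ => R1) w by rewrite qw_one; lra.
have f'0 := cycles_eq0_of_L2H_vanishes qw_one_gt0
  (fun g => l2chain_above_dim_eq0 dim2 (isT : (2 < 3)%N))
  (Hruin t 2%nat (PeanoNat.Nat.neq_succ_diag_l 1))
  (l2chain_unweighted_restriction _ qw01 fl2) f'_cycle v V.
move: f'0; rewrite /unweighted_restriction ind_T // Rmult_1_l => /Rmult_integral [|//].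
by have := qv_gt0 v; lra.
Qed.
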